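(* Let $|\psi\rangle=\sum_{v,c,w,d}a_{vc,wd}|v\rangle_A|c,w\rangle_B|d\rangle_C$ be a state on $\mathbb{C}^R\otimes(\mathbb{C}^\kappa\otimes\mathbb{C}^R)\otimes\mathbb{C}^\kappa$ (registers 1,2,3,4 with register 1 $=A$, registers 2,3 $=B$, register 4 $=C$), and let $\rho_{B,C}=\mathrm{Tr}_A(|\psi\rangle\langle\psi|)$. Suppose $\mathsf{MatchCheck}$ succeeds on $|\psi\rangle$ with probability $1-\epsilon$ and $\rho_{B,C}$ is separable across $B|C$. Then there is a state $|\phi\rangle$ that is quasirigid after applying $\mathrm{CNOT}_{1,3}\mathrm{CNOT}_{2,4}$ such that $|\langle\phi|\psi\rangle|^2\ge 1-(\kappa+1)\epsilon$.
   Context: $\mathsf{MatchCheck}$ measures all four registers in the computational basis, obtaining $(v,c,w,d)$, and accepts iff $(v,c)=(w,d)$; its success probability on $|\psi\rangle$ is $\sum_{v,c}|a_{vc,vc}|^2$. $\mathrm{CNOT}_{i,j}$ maps $|x\rangle_i|y\rangle_j\mapsto|x\rangle_i|y\oplus x\rangle_j$, with $\oplus$ addition modulo the register dimension (registers 1 and 3 have dimension $R$, registers 2 and 4 dimension $\kappa$). A bipartite state in $\mathbb{C}^R\otimes\mathbb{C}^\kappa$ is quasirigid if it has the form $\sum_{v\in[R]}\alpha_v|v\rangle|c_v\rangle$ for complex $\alpha_v$ and indices $c_v\in[\kappa]$, and rigid if moreover all $\alpha_v=1/\sqrt R$. A four-register state is ''quasirigid after applying $\mathrm{CNOT}_{1,3}\mathrm{CNOT}_{2,4}$''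 if it has the form $\sum_v\alpha_v|v\rangle|c_v\rangle|v\rangle|c_v\rangle$, i.e. applying these CNOTs yields a quasirigid state on registers 1,2 tensored with $|0\rangle|0\rangle$ on registers 3,4. *)

(* Amplitudes live in an arbitrary numClosedFieldType C
   (e.g. the complex numbers of a realType, or algC). *)
From mathcomp Require Import all_boot all_order all_algebra.
Set Implicit Arguments. Unset Strict Implicit. Unset Printing Implicit Defensive.
Import Order.TTheory GRing.Theory Num.Theory.
Local Open Scope ring_scope.

Section QDefs.
Variable C : numClosedFieldType.

Definition psd_op (T : finType) (M : T -> T -> C) : Prop :=
  forall x : T -> C, 0 <= \sum_(i : T) \sum_(j : T) (x i)^* * M i j * x j.

Definition density_op (T : finType) (M : T -> T -> C) : Prop :=
  psd_op M /\ \sum_(i : T) M i i = 1.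

Definition separable_op (TB TC : finType) (rho : TB * TC -> TB * TC -> C) : Prop :=
  exists (n : nat) (p : 'I_n -> C) (sig : 'I_n -> TB -> TB -> C)
         (tau : 'I_n -> TC -> TC -> C),
    [/\ forall k, 0 <= p k,
        \sum_(k < n) p k = 1,
        forall k, density_op (sig k),
        forall k, density_op (tau k) &
        forall b c b' c',
          rho (b, c) (b', c') = \sum_(k < n) p k * sig k b b' * tau k c c'].

Variables R kappa : nat.

Definition amp := 'I_R -> 'I_kappa -> 'I_R -> 'I_kappa -> C.

Definition sqnorm (a : amp) : C :=
  \sum_(v < R) \sum_(c < kappa) \sum_(w < R) \sum_(d < kappa) `|a v c w d| ^+ 2.

Definition is_state (a : amp) : Prop := sqnorm a = 1.

Definition inner (phi psi : amp) : C :=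
  \sum_(v < R) \sum_(c < kappa) \sum_(w < R) \sum_(d < kappa)
     (phi v c w d)^* * psi v c w d.

Definition matchcheck_prob (a : amp) : C :=
  \sum_(v < R) \sum_(c < kappa) `|a v c v c| ^+ 2.

(* rho_{B,C} = Tr_A |psi><psi|, B = registers 2,3 (indices (c,w)), C = register 4 *)
Definition rhoBC (a : amp) : ('I_kappa * 'I_R) * 'I_kappa -> ('I_kappa * 'I_R) * 'I_kappa -> C :=
  fun x y => \sum_(v < R) a v x.1.1 x.1.2 x.2 * (a v y.1.1 y.1.2 y.2)^*.

Definition quasirigid_after_cnots (phi : amp) : Prop :=
  exists (alpha : 'I_R -> C) (cv : 'I_R -> 'I_kappa),
    forall v c w d,
      phi v c w d = if [&& c == cv v, w == v & d == cv v] then alpha v else 0.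

End QDefs.

(* Call |a_{vc,wd}|^2 the mass of (v,c,w,d); eps is the mass off the diagonal
   {v = w, c = d}.  For each w pick c_w maximising |a_{wc,wc}|.  For c <> c_w,
   |a_{wc,wc}|^2 <= |a_{wc,wc}| |a_{wc_w,wc_w}|, the v = w term of the coherence
   of rho_BC between (c,w,c) and (c_w,w,c_w); its other terms are bounded by
   mass with v <> w.  Separability bounds the modulus of any coherence of
   rho_BC by the mean of the two diagonal entries with the C-register swapped,
   here (c,w,c_w) and (c_w,w,c), which is mass with c <> d.  Summing over
   c <> c_w, the diagonal mass outside the entries (w,c_w,w,c_w) is at most
   kappa * eps, and the normalised quasirigid state supported on those entries
   has overlap with psi equal to the mass they carry. *)

From mathcomp Require Import all_boot all_order all_algebra.
From mathcomp Require Import ring zify.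
Import Order.TTheory GRing.Theory Num.Theory.
Set Implicit Arguments. Unset Strict Implicit. Unset Printing Implicit Defensive.
Local Open Scope ring_scope.

Section PsdOp.
Variables (C : numClosedFieldType) (T : finType) (M : T -> T -> C).
Hypothesis psdM : psd_op M.

Lemma psd_op_diag_ge0 i : 0 <= M i i.
Proof.
have := psdM (fun k => (k == i)%:R).
rewrite (bigD1 i) //= [X in _ + X]big1 => [|k /negbTE ki]; last first.
  by rewrite big1 // => l _; rewrite ki conjC0 !mul0r.
rewrite (bigD1 i) //= big1 => [|k /negbTE ki]; last by rewrite ki mulr0.
by rewrite eqxx conjC1 mul1r mulr1 !addr0.
Qed.

Lemma psd_op_two_point i j x y : i != j ->
  0 <= x^* * M i i * x + x^* * M i j * y + y^* * M j i * x + y^* * M j j * y.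
Proof.
move=> ij; pose u k := if k == i then x else if k == j then y else 0.
have [ui uj] : u i = x /\ u j = y by rewrite /u eqxx eq_sym (negbTE ij) eqxx.
have sum2 (F : T -> C) : (forall k, u k = 0 -> F k = 0) ->
    \sum_k F k = F i + F j.
  move=> F0; rewrite (bigD1 i) //= (bigD1 j) 1?eq_sym //= big1 ?addr0 //.
  by move=> k /andP[/negbTE kj /negbTE ki]; rewrite F0 // /u ki kj.
have := psdM u; rewrite sum2 => [|k ->]; last first.
  by rewrite big1 // => l _; rewrite conjC0 !mul0r.
by rewrite !sum2 ?ui ?uj ?addrA // => k ->; rewrite mulr0.
Qed.

Lemma psd_op_adj i j : M j i = (M i j)^*.
Proof.
have [<-|ij] := eqVneq i j; first by rewrite geC0_conj ?psd_op_diag_ge0.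
have real_form x y := geC0_conj (psd_op_two_point x y ij).
have := real_form 1 1; have := real_form 1 'i.
rewrite !rmorphD !rmorphM /= !conjCK !conjC1 conjCi !mul1r !mulr1.
rewrite !(geC0_conj (psd_op_diag_ge0 i)) !(geC0_conj (psd_op_diag_ge0 j)).
move=> /eqP; rewrite -subr_eq0 => /eqP e2 /eqP; rewrite -subr_eq0 => /eqP e1.
(* 'i * e1 - e2 cancels everything but the antihermitian part of M i j, M j i *)
have : 'i *+ 2 * ((M i j)^* - M j i) = 'i * 0 - 0.
  by rewrite -{1}e1 -{1}e2; ring.
rewrite mulr0 subr0 => /eqP.
by rewrite mulf_eq0 mulrn_eq0 (negbTE (neq0Ci C)) subr_eq0 => /eqP.
Qed.

Lemma psd_op_normCK_le i j : `|M i j| ^+ 2 <= M i i * M j j.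
Proof.
have [<-|ij] := eqVneq i j; first by rewrite ger0_norm ?psd_op_diag_ge0.
have a0 := psd_op_diag_ge0 i; have b0 := psd_op_diag_ge0 j.
have form x y :
    0 <= x^* * M i i * x + x^* * M i j * y
         + y^* * (M i j)^* * x + y^* * M j j * y.
  by rewrite -psd_op_adj; apply: psd_op_two_point.
move: a0 b0 form; set a := M i i; set b := M j j; set m := M i j => a0 b0 form.
(* the test vectors (b, - conj m) and (- m, a) give b (a b - |m|^2) >= 0 and
   a (a b - |m|^2) >= 0 *)
have key : 0 <= (a + b) * (a * b - m * m^*).
  move: (addr_ge0 (form b (- m^*)) (form (- m) a)).
  rewrite !rmorphN /= conjCK (geC0_conj a0) (geC0_conj b0).
  by congr (0 <= _); ring.
rewrite normCK -subr_ge0.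
have [ab0|ab_neq0] := eqVneq (a + b) 0; last first.
  by move: key; rewrite pmulr_rge0 // lt_def ab_neq0 addr_ge0.
move/eqP: ab0; rewrite paddr_eq0 // => /andP[/eqP a_eq0 /eqP b_eq0].
have := form 1 (- m^*).
rewrite a_eq0 b_eq0 !rmorphN /= conjCK conjC1 !mul1r !mulr1 !mulr0 !mul0r.
rewrite add0r addr0 mulrN mulNr -opprD oppr_ge0 -mulr2n pmulrn_lle0 //.
by rewrite sub0r oppr_ge0.
Qed.
End PsdOp.

Lemma sqr_le_mul_AGM2 (R : numDomainType) (x y z : R) :
  0 <= x -> 0 <= y -> 0 <= z -> z ^+ 2 <= x * y -> z *+ 2 <= x + y.
Proof.
move=> x0 y0 z0 zxy.
rewrite -ler_sqr ?nnegrE ?mulrn_wge0 ?addr_ge0 // exprMn_n.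
apply: le_trans (real_leif_AGM2_scaled (ger0_real x0) (ger0_real y0)).
by rewrite ler_wMn2r.
Qed.

Lemma separable_op_norm_le (C : numClosedFieldType) (TB TC : finType)
    (rho : TB * TC -> TB * TC -> C) b c b' c' :
  separable_op rho ->
  `|rho (b, c) (b', c')| *+ 2 <= rho (b, c') (b, c') + rho (b', c) (b', c).
Proof.
case=> n [p [sig [tau [p0 _ sig_dens tau_dens rhoE]]]]; rewrite !rhoE.
rewrite -big_split /=.
apply: le_trans (ler_wMn2r _ (ler_norm_sum _ _ _)) _; rewrite -sumrMnl.
apply: ler_sum => k _.
have [[sig_psd _] [tau_psd _]] := (sig_dens k, tau_dens k).
rewrite -!mulrA -mulrDr normrM (ger0_norm (p0 k)) -mulrnAr.
rewrite ler_wpM2l // normrM sqr_le_mul_AGM2 ?mulr_ge0 ?psd_op_diag_ge0 //.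
rewrite exprMn [leRHS]mulrACA [tau k c' c' * _]mulrC.
by rewrite ler_pM ?exprn_ge0 ?psd_op_normCK_le.
Qed.

Lemma ler_psumr_pred (R : numDomainType) (I : finType) (P : pred I)
    (F : I -> R) :
  (forall i, 0 <= F i) -> \sum_(i | P i) F i <= \sum_i F i.
Proof. by move=> F0; rewrite [leRHS](bigID P) lerDl sumr_ge0. Qed.

Lemma ler_psumr_term (R : numDomainType) (I : finType) (P : pred I)
    (F : I -> R) j :
  (forall i, 0 <= F i) -> P j -> F j <= \sum_(i | P i) F i.
Proof. by move=> F0 Pj; rewrite (bigD1 j) //= lerDl sumr_ge0. Qed.

Section MatchCheckMass.
Variables (C : numClosedFieldType) (R kappa : nat) (a : amp C R kappa).

Definition mass (v : 'I_R) (c : 'I_kappa) (w : 'I_R) (d : 'I_kappa) : C :=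
  `|a v c w d| ^+ 2.

Definition bc_mass (w : 'I_R) (c d : 'I_kappa) : C := \sum_(v < R) mass v c w d.

Definition color_mismatch (w : 'I_R) : C :=
  \sum_(c < kappa) \sum_(d < kappa | d != c) bc_mass w c d.

Definition vertex_mismatch_at (w : 'I_R) (c : 'I_kappa) : C :=
  \sum_(v < R | v != w) mass v c w c.

Definition vertex_mismatch (w : 'I_R) : C :=
  \sum_(c < kappa) vertex_mismatch_at w c.

Lemma mass_ge0 v c w d : 0 <= mass v c w d.
Proof. exact: exprn_ge0. Qed.

Lemma bc_mass_ge0 w c d : 0 <= bc_mass w c d.
Proof. by apply: sumr_ge0 => v _; apply: mass_ge0. Qed.

Lemma vertex_mismatch_at_ge0 w c : 0 <= vertex_mismatch_at w c.
Proof. by apply: sumr_ge0 => v _; apply: mass_ge0. Qed.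

Lemma sqnorm_sub_matchcheck :
  sqnorm a - matchcheck_prob a
    = \sum_(w < R) (color_mismatch w + vertex_mismatch w).
Proof.
have -> : sqnorm a
    = \sum_(w < R) \sum_(c < kappa) \sum_(d < kappa) bc_mass w c d.
  rewrite /sqnorm; under eq_bigr do rewrite exchange_big.
  rewrite exchange_big; apply: eq_bigr => w _.
  rewrite exchange_big; apply: eq_bigr => c _.
  by rewrite exchange_big.
rewrite -sumrB; apply: eq_bigr => w _.
rewrite -big_split -sumrB; apply: eq_bigr => c _.
rewrite (bigD1 c) //= /vertex_mismatch_at /bc_mass (bigD1 w) //=.
rewrite /mass; ring.
Qed.

Lemma rhoBC_diag c w d : rhoBC a ((c, w), d) ((c, w), d) = bc_mass w c d.
Proof. by apply: eq_bigr => v _; rewrite /mass normCK. Qed.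

Variable cv : 'I_R -> 'I_kappa.
Hypothesis cv_max : forall w c, `|a w c w c| <= `|a w (cv w) w (cv w)|.
Hypothesis rhoBC_sep : separable_op (rhoBC a).

Lemma diag_mass_le w c :
  mass w c w c *+ 2 <= bc_mass w c (cv w) + bc_mass w (cv w) c
                       + (vertex_mismatch_at w c + vertex_mismatch_at w (cv w)).
Proof.
set c0 := cv w.
set G := \sum_(v < R) a v c w c * (a v c0 w c0)^*.
set X := \sum_(v < R | v != w) a v c w c * (a v c0 w c0)^*.
have G_split : G = a w c w c * (a w c0 w c0)^* + X by rewrite /G (bigD1 w).
have mass_le : mass w c w c <= `|G| + `|X|.
  rewrite -[`|X|]normrN; apply: le_trans (ler_normD _ _).
  by rewrite G_split addrK normrM norm_conjC /mass expr2 ler_wpM2l ?cv_max.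
apply: le_trans (ler_wMn2r 2 mass_le) _; rewrite mulrnDl lerD //.
  have := separable_op_norm_le (c, w) c (c0, w) c0 rhoBC_sep.
  by rewrite !rhoBC_diag.
apply: le_trans (ler_wMn2r 2 (ler_norm_sum _ _ _)) _.
rewrite -sumrMnl -big_split /=; apply: ler_sum => v _.
by rewrite normrM norm_conjC sqr_le_mul_AGM2 ?mulr_ge0 // exprMn.
Qed.

Lemma off_cv_mass_le w :
  \sum_(c < kappa | c != cv w) mass w c w c
    <= kappa%:R * (color_mismatch w + vertex_mismatch w).
Proof.
set c0 := cv w.
have cm_ge0 c : 0 <= \sum_(d < kappa | d != c) bc_mass w c d.
  by apply: sumr_ge0 => d _; apply: bc_mass_ge0.
have into_c0 : \sum_(c | c != c0) bc_mass w c c0 <= color_mismatch w.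
  apply: le_trans (ler_psumr_pred _ cm_ge0); apply: ler_sum => c c_neq.
  by apply: ler_psumr_term (bc_mass_ge0 w c) _; rewrite eq_sym.
have out_of_c0 : \sum_(c | c != c0) bc_mass w c0 c <= color_mismatch w.
  exact: ler_psumr_term cm_ge0 _.
have vm_le : \sum_(c | c != c0) vertex_mismatch_at w c <= vertex_mismatch w.
  exact: ler_psumr_pred _ (vertex_mismatch_at_ge0 w).
have vm0_le :
    \sum_(c | c != c0) vertex_mismatch_at w c0 <= vertex_mismatch w *+ kappa.
  apply: le_trans (ler_psumr_pred _ (fun=> vertex_mismatch_at_ge0 w c0)) _.
  rewrite sumr_const card_ord ler_wMn2r //.
  exact: ler_psumr_term (vertex_mismatch_at_ge0 w) _.
rewrite -(ler_pMn2r (n := 2)) // -sumrMnl.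
apply: le_trans (ler_sum _ (fun c _ => diag_mass_le w c)) _.
rewrite !big_split /=.
apply: le_trans (lerD (lerD into_c0 out_of_c0) (lerD vm_le vm0_le)) _.
have kappa_gt0 : (0 < kappa)%N := leq_ltn_trans (leq0n _) (ltn_ord c0).
rewrite mulr_natl -mulrnA mulrnDl -mulr2n -mulrS.
have cm_w_ge0 : 0 <= color_mismatch w by apply: sumr_ge0 => c _.
have vm_w_ge0 : 0 <= vertex_mismatch w.
  by apply: sumr_ge0 => c _; apply: vertex_mismatch_at_ge0.
by rewrite lerD // ler_wpMn2l //; lia.
Qed.

Lemma matchcheck_sub_le_cv_mass :
  matchcheck_prob a - kappa%:R * (sqnorm a - matchcheck_prob a)
    <= \sum_(w < R) mass w (cv w) w (cv w).
Proof.
rewrite sqnorm_sub_matchcheck.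
have -> : matchcheck_prob a = \sum_w mass w (cv w) w (cv w)
                              + \sum_w \sum_(c | c != cv w) mass w c w c.
  by rewrite -big_split; apply: eq_bigr => w _; rewrite (bigD1 (cv w)).
rewrite -addrA gerDl subr_le0 mulr_sumr.
by apply: ler_sum => w _; apply: off_cv_mass_le.
Qed.
End MatchCheckMass.

Section QuasirigidAmp.
Variables (C : numClosedFieldType) (R kappa : nat).

Definition quasirigid_amp (cv : 'I_R -> 'I_kappa) (alpha : 'I_R -> C) :
    amp C R kappa :=
  fun v c w d => if [&& c == cv v, w == v & d == cv v] then alpha v else 0.

Lemma sum_quasirigid_amp (F : 'I_kappa -> 'I_R -> 'I_kappa -> C -> C)
    cv alpha v :
  (forall c w d, F c w d 0 = 0) ->
  \sum_c \sum_w \sum_d F c w d (quasirigid_amp cv alpha v c w d)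
    = F (cv v) v (cv v) (alpha v).
Proof.
move=> F0; have Fout c w d : ~~ [&& c == cv v, w == v & d == cv v] ->
    F c w d (quasirigid_amp cv alpha v c w d) = 0.
  by rewrite /quasirigid_amp => /negbTE ->.
rewrite (big_only1 (cv v)) // => [|c /negbTE c_neq _]; last first.
  by rewrite big1 // => w _; rewrite big1 // => d _; rewrite Fout ?c_neq.
rewrite (big_only1 v) // => [|w /negbTE w_neq _]; last first.
  by rewrite big1 // => d _; rewrite Fout ?eqxx ?w_neq.
rewrite (big_only1 (cv v)) // => [|d /negbTE d_neq _]; last first.
  by rewrite Fout ?eqxx ?d_neq.
by rewrite /quasirigid_amp !eqxx.
Qed.

Lemma sqnorm_quasirigid_amp cv alpha :
  sqnorm (quasirigid_amp cv alpha) = \sum_v `|alpha v| ^+ 2.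
Proof.
apply: eq_bigr => v _.
by rewrite (@sum_quasirigid_amp (fun _ _ _ x => `|x| ^+ 2)) // normr0 expr0n.
Qed.

Lemma inner_quasirigid_amp cv alpha (psi : amp C R kappa) :
  inner (quasirigid_amp cv alpha) psi
    = \sum_v (alpha v)^* * psi v (cv v) v (cv v).
Proof.
apply: eq_bigr => v _.
rewrite (@sum_quasirigid_amp (fun c w d x => x^* * psi v c w d)) // => *.
by rewrite conjC0 mul0r.
Qed.

Lemma is_state_dims_gt0 (psi : amp C R kappa) :
  is_state psi -> (0 < R)%N /\ (0 < kappa)%N.
Proof.
rewrite /is_state /sqnorm; case: R psi => [|?] psi.
  by rewrite big_ord0 => /eqP; rewrite eq_sym oner_eq0.
case: kappa psi => // psi.
by rewrite big1 => [/eqP|v _]; rewrite ?big_ord0 // eq_sym oner_eq0.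
Qed.

Lemma exists_quasirigid_state (psi : amp C R kappa) (cv : 'I_R -> 'I_kappa) :
  (0 < R)%N ->
  exists phi, [/\ is_state phi, quasirigid_after_cnots phi &
                  \sum_w mass psi w (cv w) w (cv w) <= `|inner phi psi| ^+ 2].
Proof.
move=> R_gt0; set S := \sum_w _.
have S_ge0 : 0 <= S by apply: sumr_ge0 => w _; apply: mass_ge0.
have [S_eq0|S_neq0] := eqVneq S 0.
  pose r0 := Ordinal R_gt0; exists (quasirigid_amp cv (fun v => (v == r0)%:R)).
  split; [|by exists (fun v => (v == r0)%:R), cv|by rewrite S_eq0 exprn_ge0].
  rewrite /is_state sqnorm_quasirigid_amp (bigD1 r0) //= normr1 expr1n.
  by rewrite big1 ?addr0 // => v /negbTE ->; rewrite normr0 expr0n.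
have S_gt0 : 0 < S by rewrite lt_def S_neq0.
pose k := (sqrtC S)^-1.
have k_gt0 : 0 < k by rewrite invr_gt0 sqrtC_gt0.
have k2 : k ^+ 2 = S^-1 by rewrite exprVn sqrtCK.
exists (quasirigid_amp cv (fun v => psi v (cv v) v (cv v) * k)).
split; [|by exists (fun v => psi v (cv v) v (cv v) * k), cv|].
  rewrite /is_state sqnorm_quasirigid_amp.
  under eq_bigr do rewrite normrM (gtr0_norm k_gt0) exprMn.
  by rewrite -mulr_suml k2 mulfV.
rewrite inner_quasirigid_amp.
under eq_bigr do rewrite rmorphM /= (geC0_conj (ltW k_gt0)) mulrAC -normCKC.
rewrite -mulr_suml -/S normrM (gtr0_norm k_gt0) (gtr0_norm S_gt0) exprMn k2.
by rewrite expr2 mulfK.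
Qed.
End QuasirigidAmp.

Theorem lemma4p4 (C : numClosedFieldType) (R kappa : nat)
    (psi : amp C R kappa) (eps : C) :
  is_state psi ->
  matchcheck_prob psi = 1 - eps ->
  separable_op (rhoBC psi) ->
  exists phi : amp C R kappa,
    [/\ is_state phi, quasirigid_after_cnots phi &
        `|inner phi psi| ^+ 2 >= 1 - (kappa%:R + 1) * eps].
Proof.
move=> psi_state psi_match sep.
have [R_gt0 kappa_gt0] := is_state_dims_gt0 psi_state.
have argmax w : exists cw, forall c, `|psi w c w c| <= `|psi w cw w cw|.
  have [cw _ cw_max] := real_arg_maxP (i0 := Ordinal kappa_gt0) (P := xpredT)
    (F := fun c => `|psi w c w c|) isT (fun c _ => normr_real _).
  by exists cw => c; apply: cw_max.
have [cv cv_max] := fin_all_exists argmax.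
have [phi [phi_state phi_qr overlap]] := exists_quasirigid_state psi cv R_gt0.
exists phi; split=> //; apply: le_trans overlap.
apply: le_trans (matchcheck_sub_le_cv_mass cv_max sep).
rewrite psi_state psi_match [leRHS](_ : _ = 1 - (kappa%:R + 1) * eps) //; ring.
Qed.
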